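(* For every positive integer $\nu$, let $$C_{\nu}:=\sup_{t\in(0,1]}\frac{\left|1-\frac{(-1)^{\nu}T_{2\nu+1}(\sqrt{t})}{(2\nu+1)\sqrt{t}}\right|}{\sqrt{t}}.$$ Then $$\frac{1}{4}\leq\frac{C_{\nu}}{2\nu+1}\leq\frac{4}{9}.$$
   Context: $T_k$ denotes the Chebyshev polynomial of the first kind, defined by $T_0(t)=1$, $T_1(t)=t$, $T_{k+1}(t)=2tT_k(t)-T_{k-1}(t)$ for $k\ge 1$; equivalently $T_k(t)=\cos(k\arccos t)$ for $t\in[-1,1]$. *)

From Stdlib Require Import Reals Lra Lia.
Open Scope R_scope.

Fixpoint chebT (k : nat) (t : R) : R :=
  match k with
  | O => 1
  | S k' =>
      match k' with
      | O => t
      | S k'' => 2 * t * chebT k' t - chebT k'' t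
      end
  end.

Definition cnu_fun (nu : nat) (t : R) : R :=
  Rabs (1 - ((-1) ^ nu * chebT (2 * nu + 1) (sqrt t))
              / (INR (2 * nu + 1) * sqrt t)) / sqrt t.

Definition cnu_set (nu : nat) (y : R) : Prop :=
  exists t, 0 < t <= 1 /\ y = cnu_fun nu t.

From Stdlib Require Import Reals Lra Lia.
Open Scope R_scope.

(* Write [N = 2 nu + 1] and [t = x^2] with [x = sin phi]; then
   [(-1)^nu T_N(x) = sin (N phi)] and [C_nu] is the supremum of
   [|N sin phi - sin (N phi)| / (N sin^2 phi)].  At [phi = PI / N] the numerator is
   [N sin phi], giving the value [1 / sin (PI / N) >= N / PI >= N / 4].  For the upper
   bound, [sin (N phi) <= N sin phi] always, and conversely
   [sin (N phi) >= y - 4 y^2 / 9] with [y = N sin phi], which is checked by Taylor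
   bounds on [sin] according to the size of [N phi] (for [nu = 1] the defect is
   just [4 x^3]). *)

Lemma sin_ge_cubic a : 0 <= a <= PI -> a - a ^ 3 / 6 <= sin a.
Proof.
  intros [Ha0 HaPI]. destruct (sin_bound a 0 Ha0 HaPI) as [Hlow _].
  unfold sin_approx, sin_term in Hlow. cbn [sum_f_R0 Nat.mul Nat.add] in Hlow.
  replace (INR (Factorial.fact 3)) with 6 in Hlow by (rewrite INR_IZR_INZ; reflexivity).
  simpl in Hlow. lra.
Qed.

Lemma sin_ge_quintic a :
  0 <= a <= PI -> a - a ^ 3 / 6 + a ^ 5 / 120 - a ^ 7 / 5040 <= sin a.
Proof.
  intros [Ha0 HaPI]. destruct (sin_bound a 1 Ha0 HaPI) as [Hlow _].
  unfold sin_approx, sin_term in Hlow. cbn [sum_f_R0 Nat.mul Nat.add] in Hlow.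
  replace (INR (Factorial.fact 3)) with 6 in Hlow by (rewrite INR_IZR_INZ; reflexivity).
  replace (INR (Factorial.fact 5)) with 120 in Hlow by (rewrite INR_IZR_INZ; reflexivity).
  replace (INR (Factorial.fact 7)) with 5040 in Hlow by (rewrite INR_IZR_INZ; reflexivity).
  simpl in Hlow. lra.
Qed.

Lemma PI_gt_3 : 3 < PI.
Proof. pose proof PI2_3_2. lra. Qed.

Lemma chebT_cos k th : chebT k (cos th) = cos (INR k * th).
Proof.
  enough (H : chebT k (cos th) = cos (INR k * th) /\
              chebT (S k) (cos th) = cos (INR (S k) * th)) by apply H.
  induction k as [|k [IHk IHSk]].
  - simpl. rewrite Rmult_0_l, cos_0, Rmult_1_l. auto.
  - split; [exact IHSk|].
    change (chebT (S (S k)) (cos th))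
      with (2 * cos th * chebT (S k) (cos th) - chebT k (cos th)).
    rewrite IHk, IHSk.
    replace (INR (S (S k)) * th) with (INR (S k) * th + th) by (rewrite !S_INR; ring).
    replace (INR k * th) with (INR (S k) * th - th) by (rewrite S_INR; ring).
    rewrite cos_plus, cos_minus. ring.
Qed.

Lemma cos_plus_INR_PI nu a : cos (a + INR nu * PI) = (-1) ^ nu * cos a.
Proof.
  induction nu as [|nu IH].
  - simpl. rewrite Rmult_0_l, Rplus_0_r. ring.
  - replace (a + INR (S nu) * PI) with (a + INR nu * PI + PI) by (rewrite S_INR; ring).
    rewrite neg_cos, IH. simpl. ring.
Qed.

Lemma chebT_odd_sin nu phi :
  (-1) ^ nu * chebT (2 * nu + 1) (sin phi) = sin (INR (2 * nu + 1) * phi).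
Proof.
  rewrite <- cos_shift, chebT_cos.
  replace (INR (2 * nu + 1) * (PI / 2 - phi))
    with (PI / 2 - INR (2 * nu + 1) * phi + INR nu * PI)
    by (rewrite plus_INR, mult_INR; simpl; field).
  rewrite cos_plus_INR_PI, cos_shift, <- Rmult_assoc, <- Rpow_mult_distr.
  replace (-1 * -1) with 1 by ring. rewrite pow1. ring.
Qed.

Lemma Rabs_sin_mult_le k phi : Rabs (sin (INR k * phi)) <= INR k * Rabs (sin phi).
Proof.
  induction k as [|k IH].
  - simpl. rewrite Rmult_0_l, sin_0, Rabs_R0. lra.
  - replace (INR (S k) * phi) with (INR k * phi + phi) by (rewrite S_INR; ring).
    rewrite sin_plus, S_INR.
    eapply Rle_trans; [apply Rabs_triang|]. rewrite !Rabs_mult.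
    assert (Rabs (cos phi) <= 1) by (apply Rabs_le, COS_bound).
    assert (Rabs (cos (INR k * phi)) <= 1) by (apply Rabs_le, COS_bound).
    pose proof (Rabs_pos (sin (INR k * phi))). pose proof (Rabs_pos (sin phi)).
    nra.
Qed.

(* The three regimes of [u = N phi] in the lower bound [sin u >= y - 4 y^2 / 9];
   [9 / 16] is the maximum of the right-hand side. *)

Lemma sin_ge_quad_small u y : 0 <= y <= u -> u <= 9 / 8 -> y - 4 * y ^ 2 / 9 <= sin u.
Proof.
  intros [Hy Hyu] Hu. pose proof PI_gt_3.
  pose proof (sin_ge_cubic u ltac:(lra)). nra.
Qed.

Lemma sin_ge_quad_middle u y : 9 / 8 <= u <= 49 / 20 -> y - 4 * y ^ 2 / 9 <= sin u.
Proof.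
  intros Hu. pose proof PI_gt_3.
  assert (9 / 16 <= sin u).
  { destruct (Rle_dec u (PI / 2)).
    - pose proof (sin_ge_cubic (9 / 8) ltac:(lra)).
      assert (sin (9 / 8) <= sin u) by (apply sin_incr_1; lra). lra.
    - pose proof (sin_ge_quintic (49 / 20) ltac:(lra)).
      assert (sin (49 / 20) <= sin u) by (apply sin_decr_1; lra). lra. }
  assert (0 <= (y - 9 / 8) ^ 2) by apply pow2_ge_0. lra.
Qed.

Lemma sin_ge_quad_large u y :
  49 / 20 <= u <= 33 / 10 -> u * (1 - (33 / 10) ^ 2 / 150) <= y ->
  y - 4 * y ^ 2 / 9 <= sin u.
Proof.
  intros Hu Hy. pose proof PI_gt_3. pose proof PI_4.
  destruct (Rle_dec u PI).
  - assert (0 <= sin u) by (apply sin_ge_0; lra). nra.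
  - assert (Hneg : sin u = - sin (u - PI)) by (rewrite <- neg_sin; f_equal; ring).
    assert (sin (u - PI) <= u - PI) by (apply Rlt_le, sin_lt_x; lra).
    nra.
Qed.

(* For [N >= 5] the cubic bound [N sin phi >= N phi - (N phi)^3 / (6 N^2)] keeps
   [y = N sin phi] close to [u = N phi], which settles the regime [u > 49 / 20]. *)
Lemma sin_mult_ge_quad N phi :
  5 <= N -> 0 < phi <= PI / 2 ->
  N * sin phi - 4 * (N * sin phi) ^ 2 / 9 <= sin (N * phi).
Proof.
  intros HN [Hphi0 Hphi1]. pose proof PI_gt_3.
  assert (Hsin_phi : sin phi <= phi) by (apply Rlt_le, sin_lt_x; lra).
  assert (Hsin_pos : 0 < sin phi) by (apply sin_gt_0; lra).
  assert (Hy_cubic : forall a, 0 <= a <= phi ->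
            N * a - (N * a) ^ 3 / (6 * N ^ 2) <= N * sin phi).
  { intros a Ha.
    assert (sin a <= sin phi) by (apply sin_incr_1; lra).
    pose proof (sin_ge_cubic a ltac:(lra)).
    replace (N * a - (N * a) ^ 3 / (6 * N ^ 2)) with (N * (a - a ^ 3 / 6)) by (field; lra).
    apply Rmult_le_compat_l; lra. }
  set (y := N * sin phi). set (u := N * phi).
  assert (Hyu : y <= u) by (apply Rmult_le_compat_l; lra).
  assert (Hy0 : 0 <= y) by (unfold y; nra).
  destruct (Rle_dec 3 y) as [Hy3|Hy3].
  { pose proof (SIN_bound u). nra. }
  destruct (Rle_dec u (9 / 8)); [apply sin_ge_quad_small; lra|].
  destruct (Rle_dec u (49 / 20)); [apply sin_ge_quad_middle; lra|].
  assert (HN2 : 25 <= N ^ 2) by nra.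
  assert (Hu : u <= 33 / 10).
  { destruct (Rle_dec u (33 / 10)) as [|Hbig]; [assumption|exfalso].
    pose proof (Hy_cubic (33 / 10 / N)) as Hy.
    replace (N * (33 / 10 / N)) with (33 / 10) in Hy by (field; lra).
    assert ((33 / 10) ^ 3 / (6 * N ^ 2) <= (33 / 10) ^ 3 / 150).
    { apply Rmult_le_compat_l; [lra|]. apply Rinv_le_contravar; lra. }
    assert (33 / 10 / N <= phi).
    { apply (Rmult_le_reg_l N); [lra|]. replace (N * (33 / 10 / N)) with (33 / 10)
        by (field; lra). fold u. lra. }
    assert (0 <= 33 / 10 / N) by (unfold Rdiv; apply Rmult_le_pos; [lra | apply Rlt_le, Rinv_0_lt_compat; lra]).
    fold y in Hy. lra. }
  apply sin_ge_quad_large; [lra|].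
  pose proof (Hy_cubic phi ltac:(lra)) as Hy. fold u y in Hy.
  assert (u ^ 3 / (6 * N ^ 2) <= u * (33 / 10) ^ 2 / 150).
  { assert (u ^ 3 <= u * (33 / 10) ^ 2) by nra.
    apply (Rmult_le_reg_r (6 * N ^ 2)); [lra|].
    replace (u ^ 3 / (6 * N ^ 2) * (6 * N ^ 2)) with (u ^ 3) by (field; lra).
    assert (0 <= u * (33 / 10) ^ 2) by nra. nra. }
  lra.
Qed.

Lemma cnu_fun_sq nu x : 0 < x ->
  cnu_fun nu (x ^ 2) =
  Rabs (INR (2 * nu + 1) * x - (-1) ^ nu * chebT (2 * nu + 1) x)
    / (INR (2 * nu + 1) * x ^ 2).
Proof.
  intros Hx. unfold cnu_fun. rewrite sqrt_pow2 by lra.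
  assert (HN : 0 < INR (2 * nu + 1)) by (apply lt_0_INR; lia).
  replace (1 - (-1) ^ nu * chebT (2 * nu + 1) x / (INR (2 * nu + 1) * x))
    with ((INR (2 * nu + 1) * x - (-1) ^ nu * chebT (2 * nu + 1) x)
            * / (INR (2 * nu + 1) * x)) by (field; lra).
  rewrite Rabs_mult, Rabs_inv, (Rabs_pos_eq (INR (2 * nu + 1) * x)) by nra.
  field. lra.
Qed.

Lemma chebT_odd_defect_le nu x : (1 <= nu)%nat -> 0 < x <= 1 ->
  Rabs (INR (2 * nu + 1) * x - (-1) ^ nu * chebT (2 * nu + 1) x)
    <= 4 * INR (2 * nu + 1) ^ 2 * x ^ 2 / 9.
Proof.
  intros Hnu [Hx0 Hx1].
  destruct (Nat.eq_dec nu 1) as [->|Hnu1].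
  { simpl. replace (1 + 1 + 1) with 3 by ring.
    match goal with |- Rabs ?e <= _ => replace e with (4 * x ^ 3) by ring end.
    rewrite Rabs_pos_eq by (apply Rmult_le_pos, pow_le; lra). nra. }
  set (N := INR (2 * nu + 1)).
  assert (HN : 5 <= N) by (replace 5 with (INR 5) by (simpl; ring); apply le_INR; lia).
  pose proof PI_gt_3. pose proof (asin_bound x) as Hasin.
  assert (Hsin : sin (asin x) = x) by (apply sin_asin; lra).
  assert (Hasin0 : 0 < asin x).
  { destruct (Rlt_dec 0 (asin x)) as [|Hle]; [assumption|].
    assert (sin (asin x) <= sin 0) by (apply sin_incr_1; lra).
    rewrite sin_0 in *. lra. }
  rewrite <- Hsin at 2. rewrite chebT_odd_sin. fold N.
  pose proof (sin_mult_ge_quad N (asin x) HN ltac:(lra)) as Hlow.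
  pose proof (Rabs_sin_mult_le (2 * nu + 1) (asin x)) as Hup. fold N in Hup.
  rewrite Hsin in Hlow, Hup. rewrite (Rabs_pos_eq x) in Hup by lra.
  pose proof (Rle_abs (sin (N * asin x))).
  apply Rabs_le. nra.
Qed.

Lemma cnu_fun_le nu t : (1 <= nu)%nat -> 0 < t <= 1 ->
  cnu_fun nu t <= 4 * INR (2 * nu + 1) / 9.
Proof.
  intros Hnu [Ht0 Ht1].
  rewrite <- (pow2_sqrt t) by lra.
  assert (Hx0 : 0 < sqrt t) by (apply sqrt_lt_R0; lra).
  assert (Hx1 : sqrt t <= 1) by (rewrite <- sqrt_1; apply sqrt_le_1_alt; lra).
  set (x := sqrt t) in *. set (N := INR (2 * nu + 1)).
  assert (HN : 0 < N) by (apply lt_0_INR; lia).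
  assert (HNx2 : 0 < N * x ^ 2) by (apply Rmult_lt_0_compat; [|apply pow_lt]; lra).
  rewrite cnu_fun_sq by lra. fold N.
  apply (Rmult_le_reg_r (N * x ^ 2)); [assumption|].
  unfold Rdiv at 1. rewrite Rmult_assoc, Rinv_l, Rmult_1_r by lra.
  eapply Rle_trans; [apply chebT_odd_defect_le; auto|]. fold N. nra.
Qed.

Lemma cnu_fun_sin_PI_div nu : (1 <= nu)%nat ->
  cnu_fun nu (sin (PI / INR (2 * nu + 1)) ^ 2) = / sin (PI / INR (2 * nu + 1)).
Proof.
  intros Hnu. set (N := INR (2 * nu + 1)).
  assert (HN : 3 <= N) by (replace 3 with (INR 3) by (simpl; ring); apply le_INR; lia).
  pose proof PI_RGT_0.
  assert (HNphi : N * (PI / N) = PI) by (field; lra).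
  assert (Hphi0 : 0 < PI / N) by (apply Rdiv_lt_0_compat; lra).
  assert (Hsin : 0 < sin (PI / N)) by (apply sin_gt_0; nra).
  rewrite cnu_fun_sq, chebT_odd_sin by assumption. fold N.
  rewrite HNphi, sin_PI, Rminus_0_r, Rabs_pos_eq by nra. field. lra.
Qed.

Theorem mainTheorem1 (nu : nat) (hnu : (1 <= nu)%nat) :
  exists C : R, is_lub (cnu_set nu) C /\
    1 / 4 <= C / INR (2 * nu + 1) <= 4 / 9.
Proof.
  set (N := INR (2 * nu + 1)).
  assert (HN : 3 <= N) by (replace 3 with (INR 3) by (simpl; ring); apply le_INR; lia).
  assert (Hub : is_upper_bound (cnu_set nu) (4 * N / 9)).
  { intros y [t [Ht ->]]. apply cnu_fun_le; assumption. }
  destruct (completeness (cnu_set nu)) as [C [HCub HCleast]].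
  - exists (4 * N / 9). exact Hub.
  - exists (cnu_fun nu 1), 1. split; [lra | reflexivity].
  - exists C. split; [split; assumption|].
    pose proof PI_4. pose proof PI_RGT_0.
    set (x := sin (PI / N)).
    assert (HNphi : N * (PI / N) = PI) by (field; lra).
    assert (Hphi : 0 < PI / N) by (apply Rdiv_lt_0_compat; lra).
    assert (Hx : 0 < x <= PI / N) by (split; [apply sin_gt_0 | apply Rlt_le, sin_lt_x]; nra).
    assert (Hx1 : x <= 1) by apply SIN_bound.
    assert (HC_ge : / x <= C).
    { pose proof (cnu_fun_sin_PI_div nu hnu) as Hval. fold N x in Hval.
      rewrite <- Hval. apply HCub. exists (x ^ 2). split; [split; nra | reflexivity]. }
    assert (HC_le : C <= 4 * N / 9) by (apply HCleast, Hub).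
    assert (Hinv_x : N / 4 <= / x).
    { apply (Rmult_le_reg_r x); [lra|]. rewrite Rinv_l by lra. nra. }
    replace (C / N) with (C * / N) by reflexivity.
    split; apply (Rmult_le_reg_r N); try lra;
      rewrite Rmult_assoc, Rinv_l, Rmult_1_r by lra; lra.
Qed.
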